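(* Let $k,l$ be positive integers and $q\in\mathbb{C}$ with $|q|<1$. Then $$\sum q^{\lambda_1+\cdots+\lambda_l+\lambda_{l+1}}=\prod_{j=1}^{l+1}\frac{1}{1-q^{jk}}\cdot\frac{1-q+q^{lk+1}-q^{k(l+1)}}{1-q},$$ where the sum is over all integer tuples $(\lambda_1,\dots,\lambda_{l+1})$ with $\lambda_1\ge\lambda_2\ge\cdots\ge\lambda_{l+1}\ge0$ and $k\mid\lambda_j$ for $1\le j\le l$. *)

From HB Require Import structures.
From mathcomp Require Import all_boot all_order all_algebra.
From mathcomp Require Import complex.
From mathcomp Require Import all_classical all_reals all_analysis.

Set Implicit Arguments.
Unset Strict Implicit.
Unset Printing Implicit Defensive.

Import Order.TTheory GRing.Theory Num.Theory.
Import numFieldTopology.Exports numFieldNormedType.Exports.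
Local Open Scope ring_scope.

(* Equip C = R[i] with its standard normed-module structure (norm = complex modulus),
   obtained from the generic numFieldType one, so that limits in R[i] make sense. *)
HB.instance Definition _ (R : rcfType) := NormedModule.copy R[i] (R[i])^o.

(* A tuple (lambda_1, ..., lambda_{l+1}) is encoded as t : 'I_(l+1) -> nat
   with lambda_{i+1} = t i. *)
Definition admissible (k l : nat) (t : 'I_l.+1 -> nat) : bool :=
  [forall i : 'I_l.+1, forall j : 'I_l.+1, (i <= j)%N ==> (t j <= t i)%N]
  && [forall i : 'I_l.+1, (i < l)%N ==> (k %| t i)%N].
Arguments admissible : clear implicits.

(* Partial sum over admissible tuples with all entries <= N
   (equivalently lambda_1 <= N); these finite sets exhaust the index set. *)
Definition partial_sum (R : realType) (k l : nat) (q : R[i]) (N : nat) : R[i] :=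
  \sum_(t : {ffun 'I_l.+1 -> 'I_N.+1} | admissible k l (fun i => nat_of_ord (t i)))
     q ^+ (\sum_(i < l.+1) nat_of_ord (t i))%N.
Arguments partial_sum : clear implicits.

From HB Require Import structures.
From mathcomp Require Import all_boot all_order all_algebra.
From mathcomp Require Import complex.
From mathcomp Require Import all_classical all_reals all_analysis.
From mathcomp Require Import ring.
Import Order.TTheory GRing.Theory Num.Theory.
Import numFieldTopology.Exports numFieldNormedType.Exports.
Local Open Scope classical_set_scope.
Local Open Scope ring_scope.
Set Implicit Arguments.
Unset Strict Implicit.

(* Cutting the sum at lambda_1 <= N turns it into a nested sum over nonincreasing
   chains.  Writing lambda_j = k mu_j for j <= l with x = q^k, the innermost sum
   over lambda_(l+1) <= k mu_l is (1 - q^(k mu_l + 1)) / (1 - q), so the partial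
   sum is a linear combination of two sums over chains
   N/k >= mu_1 >= ... >= mu_l of x^(mu_1 + ... + mu_l) f(mu_l), with f = 1 and
   f(mu) = x^mu.  Splitting off the chains ending in 0 and shifting the others down
   by one shows that such a sum a_M satisfies a_(M+1) = b_(M+1) + c a_M with
   |c| < 1 and b the analogous sum for one step shorter chains, hence
   a_M -> (lim b) / (1 - c); by induction the limits are products of
   1 / (1 - x^j), and the stated formula is their combination. *)

Lemma forall_ord_recl n (P : pred 'I_n.+1) :
  [forall i, P i] = P ord0 && [forall i, P (lift ord0 i)].
Proof.
apply/forallP/andP => [P_all | [P0 /forallP P_lift] i].
  by split; [|apply/forallP] => *; apply: P_all.
by case: (unliftP ord0 i) => [j ->|->].
Qed.

Definition nonincreasing n (u : 'I_n -> nat) : bool :=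
  [forall i : 'I_n, forall j : 'I_n, (i <= j)%N ==> (u j <= u i)%N].

Lemma nonincreasing_recl n (u : 'I_n.+1 -> nat) :
  nonincreasing u =
  [forall i, u (lift ord0 i) <= u ord0]%N && nonincreasing (u \o lift ord0).
Proof.
rewrite /nonincreasing forall_ord_recl; congr andb.
  by rewrite forall_ord_recl /= leqnn.
under eq_forallb => i do rewrite forall_ord_recl /= /bump /=.
by under eq_forallb => i do under eq_forallb => j do rewrite !add1n ltnS.
Qed.

Definition ffun_cons (T : Type) n (a : T) (t : {ffun 'I_n -> T}) : {ffun 'I_n.+1 -> T} :=
  [ffun i => if unlift ord0 i is Some j then t j else a].

Lemma ffun_cons0 (T : Type) n (a : T) (t : {ffun 'I_n -> T}) : ffun_cons a t ord0 = a.
Proof. by rewrite ffunE unlift_none. Qed.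

Lemma ffun_consS (T : Type) n (a : T) (t : {ffun 'I_n -> T}) (j : 'I_n) :
  ffun_cons a t (lift ord0 j) = t j.
Proof. by rewrite ffunE liftK. Qed.

Lemma sum_ffun_cons (K : nmodType) (T : finType) n (G : {ffun 'I_n.+1 -> T} -> K) :
  \sum_(t : {ffun 'I_n.+1 -> T}) G t =
  \sum_(a : T) \sum_(t : {ffun 'I_n -> T}) G (ffun_cons a t).
Proof.
rewrite pair_big (reindex (fun p : T * {ffun 'I_n -> T} => ffun_cons p.1 p.2)) //=.
exists (fun f : {ffun 'I_n.+1 -> T} => (f ord0, [ffun j => f (lift ord0 j)])).
  move=> [a t] _ /=; rewrite ffun_cons0; congr pair; apply/ffunP => j.
  by rewrite ffunE ffun_consS.
move=> f _; apply/ffunP => i; rewrite ffunE.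
by case: unliftP => [j ->|->] //; rewrite ffunE.
Qed.

Lemma sum_ffun_ord0 (K : nmodType) (T : finType) (G : {ffun 'I_0 -> T} -> K) t0 :
  \sum_(t : {ffun 'I_0 -> T}) G t = G t0.
Proof.
rewrite (eq_bigr (fun=> G t0)) => [|t _]; last by congr G; apply/ffunP => -[].
by rewrite sumr_const card_ffun card_ord expn0.
Qed.

Lemma forall_ffun_cons (T : finType) (P : pred T) n (a : T) (t : {ffun 'I_n -> T}) :
  [forall i, P (ffun_cons a t i)] = P a && [forall i, P (t i)].
Proof.
rewrite forall_ord_recl ffun_cons0; congr andb.
by apply: eq_forallb => i; rewrite ffun_consS.
Qed.

Lemma nonincreasing_ffun_cons B n (a : 'I_B) (t : {ffun 'I_n -> 'I_B}) :
  nonincreasing (fun i => ffun_cons a t i) =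
  [forall i, t i <= a]%N && nonincreasing (fun i => t i).
Proof.
rewrite nonincreasing_recl /= ffun_cons0; congr andb.
  by apply: eq_forallb => i; rewrite ffun_consS.
by congr nonincreasing; apply/funext => i /=; rewrite ffun_consS.
Qed.

Fixpoint chain_sum {K : pzSemiRingType} (n : nat) (h : nat -> nat -> K) (c : nat) : K :=
  if n is n'.+1 then \sum_(a < c.+1) h 0%N a * chain_sum n' (fun i => h i.+1) a
  else 1.

Lemma sum_nonincreasing_prod (K : pzSemiRingType) n (h : nat -> nat -> K) B c :
  (c < B)%N ->
  \sum_(t : {ffun 'I_n -> 'I_B} |
        [forall i, t i <= c]%N && nonincreasing (fun i => nat_of_ord (t i)))
    \prod_(i < n) h i (t i) = chain_sum n h c.
Proof.
elim: n h c => [|n IH] h c cB.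
  rewrite big_mkcond (@sum_ffun_ord0 _ _ _ [ffun=> Ordinal cB]) big_ord0 /=.
  by case: ifP => // /negP[]; rewrite /nonincreasing; apply/andP; split; apply/forallP => -[].
rewrite big_mkcond sum_ffun_cons /=.
rewrite (big_ord_widen B (fun a => h 0%N a * chain_sum n (fun i => h i.+1) a) cB).
rewrite [RHS]big_mkcond /=.
apply: eq_bigr => a _; rewrite ltnS.
under eq_bigr => t _ do rewrite (forall_ffun_cons (fun x : 'I_B => x <= c)%N)
  nonincreasing_ffun_cons big_ord_recl ffun_cons0.
case: (leqP a c) => [ac|ca]; last by apply: big1.
rewrite -(IH (fun i => h i.+1) a (ltn_ord a)) mulr_sumr [RHS]big_mkcond.
apply: eq_bigr => t _ /=.
have bound_c : [forall i, t i <= a]%N -> [forall i, t i <= c]%N.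
  by move=> /forallP ta; apply/forallP => i; apply: leq_trans (ta i) ac.
case: (boolP [forall i, t i <= a]%N) => [ta | _]; last by rewrite !andbF.
rewrite bound_c //=; case: ifP => // _; congr (_ * _).
by apply: eq_bigr => i _; rewrite ffun_consS.
Qed.

Definition dvd_weight {K : pzSemiRingType} (q : K) (k m i a : nat) : K :=
  if (i < m)%N && ~~ (k %| a)%N then 0 else q ^+ a.

Lemma prod_dvd_weight (K : comPzSemiRingType) (q : K) k l (t : 'I_l.+1 -> nat) :
  \prod_(i < l.+1) dvd_weight q k l i (t i) =
  if [forall i : 'I_l.+1, (i < l)%N ==> (k %| t i)%N]
  then q ^+ (\sum_(i < l.+1) t i)%N else 0.
Proof.
case: (boolP [forall i, _]) => [/forallP t_dvd | /forallPn [i i_bad]].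
  rewrite (big_morph (fun n => q ^+ n) (exprD q) (expr0 q)).
  apply: eq_bigr => i _; move: (t_dvd i).
  by rewrite /dvd_weight; case: (i < l)%N => //= ->.
rewrite (bigD1 i) //= /dvd_weight; move: i_bad.
by case: (i < l)%N (k %| t i)%N => [] [] //= _; rewrite mul0r.
Qed.

Lemma partial_sum_chain_sum (R : realType) k l (q : R[i]) N :
  partial_sum R k l q N = chain_sum l.+1 (dvd_weight q k l) N.
Proof.
rewrite /partial_sum -(sum_nonincreasing_prod _ _ (ltnSn N)).
rewrite [RHS](eq_bigl (fun t : {ffun 'I_l.+1 -> 'I_N.+1} => nonincreasing (fun i => t i))).
  by rewrite /admissible big_mkcondr; apply: eq_bigr => t _; rewrite prod_dvd_weight.
by move=> t; rewrite (introT forallP (fun i => leq_ord (t i))).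
Qed.

Lemma sum_ord_dvdn (K : nmodType) k (F : nat -> K) N : (0 < k)%N ->
  \sum_(a < N.+1) (if (k %| a)%N then F a else 0) = \sum_(j < (N %/ k).+1) F (k * j)%N.
Proof.
move=> k_gt0; elim: N => [|N IH]; first by rewrite !big_ord1 div0n big_ord1 muln0 dvdn0.
rewrite big_ord_recr /= IH divnS //.
case: (boolP (k %| N.+1)%N) => [k_dvd|_] /=; last by rewrite add0n addr0.
rewrite add1n [RHS]big_ord_recr /=; congr (_ + _).
by rewrite -[in LHS](divnK k_dvd) divnS // k_dvd add1n mulnC.
Qed.

Fixpoint geom_chain_sum {K : pzSemiRingType} (n : nat) (w : K) (f : nat -> K) (M : nat) : K :=
  if n is n'.+1 then \sum_(j < M.+1) w ^+ j * geom_chain_sum n' w f j else f M.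

Lemma chain_sum_dvd_weightS (K : pzSemiRingType) (q : K) k m N : (0 < k)%N ->
  chain_sum m.+2 (dvd_weight q k m.+1) N =
  \sum_(j < (N %/ k).+1) (q ^+ k) ^+ j * chain_sum m.+1 (dvd_weight q k m) (k * j).
Proof.
move=> k_gt0; under [RHS]eq_bigr => j _ do rewrite -exprM.
rewrite -(@sum_ord_dvdn _ k (fun a => q ^+ a * chain_sum m.+1 (dvd_weight q k m) a) _ k_gt0).
apply: eq_bigr => a _; rewrite /dvd_weight /=.
by case: (k %| a)%N => //=; rewrite mul0r.
Qed.

Lemma chain_sum_dvd_weight (K : pzSemiRingType) (q : K) k m j : (0 < k)%N ->
  chain_sum m.+1 (dvd_weight q k m) (k * j) =
  geom_chain_sum m (q ^+ k) (fun i => \sum_(b < (k * i).+1) q ^+ b) j.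
Proof.
move=> k_gt0; elim: m j => [|m IH] j.
  by apply: eq_bigr => b _; rewrite mulr1.
rewrite chain_sum_dvd_weightS // mulKn //.
by apply: eq_bigr => i _; rewrite IH.
Qed.

Lemma partial_sum_geom_chain_sum (R : realType) k l (q : R[i]) N : (0 < k)%N ->
  partial_sum R k l.+1 q N =
  geom_chain_sum l.+1 (q ^+ k) (fun i => \sum_(b < (k * i).+1) q ^+ b) (N %/ k).
Proof.
move=> k_gt0; rewrite partial_sum_chain_sum chain_sum_dvd_weightS //.
by apply: eq_bigr => j _; rewrite chain_sum_dvd_weight.
Qed.

Section GeomChainSum.
Variables (K : comNzRingType) (w : K).

Lemma eq_geom_chain_sum n (f g : nat -> K) : f =1 g ->
  geom_chain_sum n w f =1 geom_chain_sum n w g.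
Proof. by move=> fg; elim: n => [|n IH] M //=; apply: eq_bigr => j _; rewrite IH. Qed.

Lemma geom_chain_sumD n a b (f g : nat -> K) M :
  geom_chain_sum n w (fun j => a * f j + b * g j) M =
  a * geom_chain_sum n w f M + b * geom_chain_sum n w g M.
Proof.
elim: n M => [|n IH] M //=.
by rewrite !mulr_sumr -big_split; apply: eq_bigr => j _ /=; rewrite IH; ring.
Qed.

Lemma geom_chain_sumS n f M :
  geom_chain_sum n.+1 w f M = \sum_(j < M.+1) w ^+ j * geom_chain_sum n w f j.
Proof. by []. Qed.

Lemma geom_chain_sum0 n f : geom_chain_sum n w f 0 = f 0%N.
Proof. by elim: n => [|n IH] //=; rewrite big_ord1 IH mul1r. Qed.

Lemma geom_chain_sum_exprS n (z : K) M :
  geom_chain_sum n.+1 w (GRing.exp z) M.+1 =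
  geom_chain_sum n w (fun=> 1) M.+1 + w ^+ n.+1 * z * geom_chain_sum n.+1 w (GRing.exp z) M.
Proof.
elim: n M => [|n IH] M.
  rewrite /= big_ord_recl /= expr0 !mul1r mulr_sumr; congr (_ + _).
  by apply: eq_bigr => j _; rewrite /bump leq0n add1n !exprS; ring.
rewrite geom_chain_sumS big_ord_recl geom_chain_sum0 !expr0 mulr1.
under eq_bigr => j _ do rewrite lift0 IH.
rewrite (geom_chain_sumS n) [in RHS]big_ord_recl geom_chain_sum0 expr0 mulr1.
rewrite (geom_chain_sumS n.+1 _ M) !mulr_sumr -addrA -big_split /=; congr (_ + _).
by apply: eq_bigr => j _; rewrite /bump leq0n add1n !exprS; ring.
Qed.

End GeomChainSum.

Lemma one_sub_neq0 (K : numDomainType) (y : K) : `|y| < 1 -> 1 - y != 0.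
Proof. by rewrite subr_eq0; apply: contraTneq => <-; rewrite normr1 ltxx. Qed.

Section AffineRecurrence.
Variables (K : numFieldType) (c : K).
Hypotheses (c_lt1 : `|c| < 1) (expr_c_cvg0 : c ^+ n @[n --> \oo] --> 0).

Lemma cvg0_affine_rec (e d : nat -> K) :
  d @ \oo --> 0 -> (forall n, e n.+1 = d n + c * e n) -> e @ \oo --> 0.
Proof.
move=> d_cvg0 e_rec; apply/cvgr0Pnorm_le => eps eps_gt0.
set r := `|c|; set eps' := eps * (1 - r) / 2.
have eps'_gt0 : 0 < eps' by rewrite divr_gt0 // mulr_gt0 // subr_gt0.
have [N0 _ d_small] := (cvgr0Pnorm_le d).1 d_cvg0 _ eps'_gt0.
set D := `|e N0|.
have e_bound m : `|e (N0 + m)%N| <= eps / 2 + r ^+ m * D.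
  elim: m => [|m IH]; first by rewrite addn0 expr0 mul1r lerDr divr_ge0 // ltW.
  rewrite addnS e_rec; apply: le_trans (ler_normD _ _) _; rewrite normrM -/r.
  have d_le : `|d (N0 + m)%N| <= eps' by apply: d_small; rewrite /= leq_addr.
  apply: le_trans (lerD d_le (ler_wpM2l (normr_ge0 c) IH)) _.
  suff -> : eps' + r * (eps / 2 + r ^+ m * D) = eps / 2 + r ^+ m.+1 * D by [].
  by rewrite /eps' /r exprS; field.
have : c ^+ m * D @[m --> \oo] --> 0 * D by apply: cvgMr_tmp.
rewrite mul0r => /cvgr0Pnorm_le /(_ (eps / 2)) [|N1 _ pow_small]; first by rewrite divr_gt0.
exists (N0 + N1)%N => // n /= n_ge.
rewrite -(subnKC (leq_trans (leq_addr N1 N0) n_ge)).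
apply: le_trans (e_bound _) _; rewrite [leRHS](splitr eps) lerD2l.
have := pow_small (n - N0)%N; rewrite normrM normrX normr_id; apply.
by rewrite /= leq_subRL // (leq_trans (leq_addr _ _) n_ge).
Qed.

Lemma cvg_affine_rec (a b : nat -> K) (L : K) :
  b @ \oo --> L -> (forall n, a n.+1 = b n.+1 + c * a n) -> a @ \oo --> L / (1 - c).
Proof.
move=> b_cvg a_rec; have c_neq1 : 1 - c != 0 by exact: one_sub_neq0.
set A := L / (1 - c); have A_fix : A = L + c * A by rewrite /A; field.
apply/subr_cvg0/(@cvg0_affine_rec _ (fun n => b n.+1 - L)).
  by apply/subr_cvg0; rewrite (cvg_shiftS b).
by move=> n; rewrite a_rec {1}A_fix; ring.
Qed.

End AffineRecurrence.

Lemma cvg_expr_complex (R : realType) (c : R[i]) : `|c| < 1 -> c ^+ n @[n --> \oo] --> 0.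
Proof.
move=> c_lt1; apply/cvgr0Pnorm_le => eps eps_gt0.
have [s eps_def] : exists s : R, eps = s%:C%C.
  by rewrite -(ger0_norm (ltW eps_gt0)) normc_def; eexists.
have [r r_def] : exists r : R, `|c| = r%:C%C by rewrite normc_def; eexists.
have s_gt0 : 0 < s by rewrite -ltcR rmorph0 -eps_def.
have r_ge0 : 0 <= r by rewrite -ler0c -r_def.
have r_lt1 : r < 1 by rewrite -ltcR rmorph1 -r_def.
have : r ^+ n @[n --> \oo] --> 0 by apply: cvg_expr; rewrite ger0_norm.
move/cvgr0Pnorm_le => /(_ _ s_gt0); apply: filterS => n.
move=> r_small; rewrite normrX r_def eps_def -rmorphXn lecR.
exact: le_trans (ler_norm _) r_small.
Qed.

Section GeomChainSumLimit.
Variables (R : realType) (x : R[i]).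
Hypothesis x_lt1 : `|x| < 1.

Lemma cvg_geom_chain_sum_expr n (z : R[i]) (P : R[i]) : `|x ^+ n.+1 * z| < 1 ->
  geom_chain_sum n x (fun=> 1) @ \oo --> P ->
  geom_chain_sum n.+1 x (GRing.exp z) @ \oo --> P / (1 - x ^+ n.+1 * z).
Proof.
move=> xz_lt1 G_cvg.
have G_cvgS := cvg_affine_rec xz_lt1 (cvg_expr_complex xz_lt1) G_cvg
  (geom_chain_sum_exprS x n z).
exact: G_cvgS.
Qed.

Lemma cvg_geom_chain_sum1 n :
  geom_chain_sum n x (fun=> 1) @ \oo --> \prod_(1 <= j < n.+1) (1 - x ^+ j)^-1.
Proof.
elim: n => [|n IH]; first by rewrite big_geq //; apply: cvg_cst.
have -> : geom_chain_sum n.+1 x (fun=> 1) = geom_chain_sum n.+1 x (GRing.exp 1).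
  by apply/funext/eq_geom_chain_sum => j; rewrite expr1n.
have xn_lt1 : `|x ^+ n.+1 * 1| < 1 by rewrite mulr1 normrX exprn_ilt1.
have G_cvg := cvg_geom_chain_sum_expr xn_lt1 IH.
by rewrite mulr1 in G_cvg; rewrite big_nat_recr.
Qed.

End GeomChainSumLimit.

Lemma sum_expr_ord (K : fieldType) (q : K) n : q != 1 ->
  \sum_(b < n) q ^+ b = (1 - q ^+ n) / (1 - q).
Proof.
move=> q_neq1; rewrite -[1 - q ^+ n]opprB -[1 - q]opprB subrX1.
by rewrite invrN mulrNN mulrC mulKf // subr_eq0.
Qed.

Lemma partial_sum_geom_split (R : realType) k l (q : R[i]) N : (0 < k)%N -> q != 1 ->
  partial_sum R k l.+1 q N =
  (1 - q)^-1 * geom_chain_sum l.+1 (q ^+ k) (fun=> 1) (N %/ k) +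
  (- q / (1 - q)) * geom_chain_sum l.+1 (q ^+ k) (GRing.exp (q ^+ k)) (N %/ k).
Proof.
move=> k_gt0 q_neq1; rewrite partial_sum_geom_chain_sum // -geom_chain_sumD.
apply: eq_geom_chain_sum => j; rewrite sum_expr_ord // -exprM exprS.
by field; rewrite subr_eq0 eq_sym.
Qed.

Lemma limit_formula_split (K : fieldType) (q : K) k l :
  1 - q != 0 -> 1 - (q ^+ k) ^+ l.+1 != 0 -> 1 - (q ^+ k) ^+ l.+2 != 0 ->
  (\prod_(1 <= j < l.+3) (1 - q ^+ (j * k))^-1) *
    ((1 - q + q ^+ (l.+1 * k + 1) - q ^+ (k * (l.+1 + 1))) / (1 - q)) =
  (1 - q)^-1 * \prod_(1 <= j < l.+2) (1 - (q ^+ k) ^+ j)^-1 +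
  - q / (1 - q) *
    ((\prod_(1 <= j < l.+1) (1 - (q ^+ k) ^+ j)^-1) / (1 - (q ^+ k) ^+ l.+1 * q ^+ k)).
Proof.
move=> q1_neq0 xl1_neq0 xl2_neq0.
under eq_bigr => j _ do rewrite mulnC exprM.
rewrite [\prod_(1 <= j < l.+3) _]big_nat_recr // [\prod_(1 <= j < l.+2) _]big_nat_recr //.
rewrite exprD expr1 (mulnC l.+1 k) exprM addn1 exprM -exprSr.
(* [big_nat_recr] leaves the products as applications of the monoid law,
   which [field] does not see as ring multiplications. *)
rewrite /GRing.GRing_mul__canonical__Monoid_Law /=.
by field; rewrite q1_neq0 xl1_neq0 xl2_neq0.
Qed.

Theorem lemma11 (R : realType) (k l : nat) (q : R[i])
  (hk : (0 < k)%N) (hl : (0 < l)%N) (hq : `|q| < 1) :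
  partial_sum R k l q N @[N --> \oo] -->
    (\prod_(1 <= j < l.+2) (1 - q ^+ (j * k))^-1) *
    ((1 - q + q ^+ (l * k + 1) - q ^+ (k * (l + 1))) / (1 - q)).
Proof.
case: l hl => // l _.
have x_lt1 : `|q ^+ k| < 1 by rewrite normrX exprn_ilt1 // -lt0n.
have q_neq1 : q != 1 by rewrite eq_sym -subr_eq0 one_sub_neq0.
have xpow_lt1 j : (0 < j)%N -> `|(q ^+ k) ^+ j| < 1.
  by move=> j_gt0; rewrite normrX exprn_ilt1 // -lt0n.
have G1 := cvg_geom_chain_sum1 (n := l.+1) x_lt1.
have xl2_lt1 : `|(q ^+ k) ^+ l.+1 * q ^+ k| < 1 by rewrite -exprSr xpow_lt1.
have Gx := cvg_geom_chain_sum_expr xl2_lt1 (cvg_geom_chain_sum1 (n := l) x_lt1).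
rewrite limit_formula_split; try by apply: one_sub_neq0; rewrite ?xpow_lt1.
have -> : partial_sum R k l.+1 q = (fun M =>
    (1 - q)^-1 * geom_chain_sum l.+1 (q ^+ k) (fun=> 1) M +
    (- q / (1 - q)) * geom_chain_sum l.+1 (q ^+ k) (GRing.exp (q ^+ k)) M) \o divn^~ k.
  by apply/funext => N; exact: partial_sum_geom_split.
exact: cvg_comp _ _ (cvg_divnr _ hk) (cvgD (cvgMl_tmp G1) (cvgMl_tmp Gx)).
Qed.
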